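(* Let $\mathcal N$ be a monotonic max $(\mathrm{Col},\delta)$-GNN with $L$ layers and dimensions $\delta_0,\dots,\delta_L$, and let $\delta_{\mathcal N}=\max(\delta_0,\dots,\delta_L)$. Let $\Pi_{\mathcal N}$ be the Datalog program containing, up to variable renaming, every $(L,\,|\mathrm{Col}|\cdot\delta_{\mathcal N})$-tree-like rule without inequalities (over the $(\mathrm{Col},\delta)$-signature) that is captured by $\mathcal N$. Then $\mathcal N$ and $\Pi_{\mathcal N}$ are equivalent, i.e. $T_{\mathcal N}(D)=T_{\Pi_{\mathcal N}}(D)$ for every $(\mathrm{Col},\delta)$-dataset $D$.
   Context: Datalog. Fix disjoint countably infinite sets of predicates (each with an arity), constants and variables. A term is a constant or a variable; an atom is $P(t_1,\dots,t_n)$ with $P$ of arity $n$; an inequality is $t_1\neq t_2$; a literal is an atom or an inequality; a fact is a variable-free atom; a dataset is a finite set of facts. A rule has the form $B_1\wedge\dots\wedge B_n\to H$ with $n\ge0$, literals $B_i$ and an atom $H$ (no safety condition; the empty body is written $\top$). A substitution maps finitely many variables to variable-free terms. For a rule $r$ and dataset $D$, $T_r(D)$ is the set of facts $H\nu$ for each substitution $\nu$ mapping all variables of $r$ to terms occurring in $D$ such that $B_i\nu\in D$ for each body atom and $s\neq t$ for each instantiated body inequality $s\neq t$. For a program (finite set of rules) $\Pi$, $T_\Pi(D)=\bigcup_{r\in\Pi}T_r(D)$. Two rules are equal up to variable renaming if a bijection between their variable sets maps one onto the other with exactly the same conjuncts. Graphs and GNNs. For a finite set of colours $\mathrm{Col}$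 and $\delta\in\mathbb N$, a $(\mathrm{Col},\delta)$-graph is $G=\langle V,\{E^c\}_{c\in\mathrm{Col}},\lambda\rangle$ where $V$ is a finite vertex set, $E^c\subseteq V\times V$, and $\lambda$ assigns each vertex a vector in $\mathbb R^\delta$; it is Boolean if all feature entries are in $\{0,1\}$. A $(\mathrm{Col},\delta)$-GNN $\mathcal N$ with $L\ge 1$ layers consists of dimensions $\delta_0=\delta,\delta_1,\dots,\delta_{L-1},\delta_L=\delta$; real matrices $A_\ell$, $B_\ell^c$ of size $\delta_\ell\times\delta_{\ell-1}$ and bias vectors $b_\ell\in\mathbb R^{\delta_\ell}$ ($1\le\ell\le L$, $c\in\mathrm{Col}$); aggregation functions $\mathrm{agg}_\ell$ from finite real multisets to $\mathbb R$ (applied componentwise); an activation $\sigma:\mathbb R\to\mathbb R$ and a classification function $\mathrm{cls}:\mathbb R\to\{0,1\}$ (both componentwise). Applying $\mathcal N$ to $G$ yields labellings $\lambda_0=\lambda,\dots,\lambda_L$ with $\mathbf v_\ell=\sigma\big(A_\ell\mathbf v_{\ell-1}+\sum_{c}B_\ell^c\,\mathrm{agg}_\ell(\{\!\{\mathbf u_{\ell-1}\mid (v,u)\in E^c\}\!\})+b_\ell\big)$; $\mathcal N(G)$ has the same vertices and edges with each $v$ labelled $\mathrm{cls}(\mathbf v_L)$. Canonical transformation. The $(\mathrm{Col},\delta)$-signature consists of binary predicates $E^c$ ($c\in\mathrm{Col}$) and unary predicates $U_1,\dots,U_\delta$; a $(\mathrm{Col},\delta)$-dataset is a dataset over this signature.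 Its canonical encoding $\mathrm{enc}(D)$ has a vertex $v_t$ per term $t$ occurring in $D$, edges $(v_t,v_s)\in E^c$ iff $E^c(t,s)\in D$, and $i$-th feature of $v_t$ equal to $1$ iff $U_i(t)\in D$ (else $0$). The canonical decoding of a Boolean graph contains $E^c(t,s)$ for each edge $(v_t,v_s)\in E^c$ and $U_i(t)$ for each vertex $v_t$ with $i$-th feature $1$. $T_{\mathcal N}(D)=\mathrm{dec}(\mathcal N(\mathrm{enc}(D)))$. $\mathcal N$ captures a rule or program $\alpha$ if $T_\alpha(D)\subseteq T_{\mathcal N}(D)$ for every $(\mathrm{Col},\delta)$-dataset $D$; they are equivalent if $T_\alpha(D)=T_{\mathcal N}(D)$ for all such $D$. Monotonic max GNN: a $(\mathrm{Col},\delta)$-GNN with all entries of all $A_\ell,B_\ell^c$ nonnegative, each $\mathrm{agg}_\ell=\max$ (componentwise maximum of the multiset, and $0$ for the empty multiset), $\sigma$ monotonically increasing, unbounded and with range $\mathbb R_{\ge0}$, and $\mathrm{cls}$ a step function with some threshold $t$ ($\mathrm{cls}(t')=0$ for $t'<t$, $=1$ for $t'\ge t$). Tree-like formulas. Defined inductively: for any variable $x$, $\top$ is tree-like for $x$; for any unary predicate $U$, $U(x)$ is tree-like for $x$; if $\varphi_1,\varphi_2$ are tree-like for $x$ and share no variable other than $x$, then $\varphi_1\wedge\varphi_2$ is tree-like for $x$; if $E^c$ is a binary predicate and $\varphi_1,\dots,\varphi_n$ are tree-like for pairwise distinct variables $y_1,\dots,y_n$ respectively, none containing $x$ and pairwise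 sharing no variable, then $\bigwedge_{i=1}^n(E^c(x,y_i)\wedge\varphi_i)\wedge\bigwedge_{1\le i<j\le n}y_i\neq y_j$ is tree-like for $x$. In a tree-like formula $\varphi$, the fan-out of a variable $x$ is the number of distinct variables $y$ with $E^c(x,y)$ a conjunct of $\varphi$ for some $c$; the depth of $x$ is the maximal $n$ such that there are variables $x_0,\dots,x_n=x$ and colours with $E^{c_i}(x_{i-1},x_i)$ a conjunct for $1\le i\le n$; the depth of $\varphi$ is the maximal depth of its variables. For natural numbers $d,f$, $\varphi$ is $(d,f)$-tree-like if every variable of depth $i$ has $i\le d$ and fan-out at most $f\cdot(d-i)$. A rule is $(d,f)$-tree-like if it has the form $\varphi\to U(x)$ with $U$ unary and $\varphi$ a $(d,f)$-tree-like formula for $x$. *)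

From HB Require Import structures.
From mathcomp Require Import all_boot all_order all_algebra.
From mathcomp Require Import reals.
Set Implicit Arguments. Unset Strict Implicit. Unset Printing Implicit Defensive.
Import Order.TTheory GRing.Theory Num.Theory.
Local Open Scope ring_scope.

(* Colours: a finite type C.  Unary predicates U_i: indexed by nat i      *)
(* (the signature allows i < delta).  Constants and variables: nat.        *)
Section Syntax.
Variable C : finType.

Inductive fact := FEdge of C & nat & nat
                | FUn of nat & nat.

Definition fact_enc (f : fact) : (C * nat * nat) + (nat * nat) :=
  match f with FEdge c a b => inl (c, a, b) | FUn i a => inr (i, a) end.
Definition fact_dec (s : (C * nat * nat) + (nat * nat)) : fact :=
  match s with inl (c, a, b) => FEdge c a b | inr (i, a) => FUn i a end.
Lemma fact_encK : cancel fact_enc fact_dec. Proof. by case. Qed.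
HB.instance Definition _ := Equality.copy fact (can_type fact_encK).

Inductive term := TVar of nat | TCst of nat.
Definition term_enc (t : term) : nat + nat :=
  match t with TVar v => inl v | TCst c => inr c end.
Definition term_dec (s : nat + nat) : term :=
  match s with inl v => TVar v | inr c => TCst c end.
Lemma term_encK : cancel term_enc term_dec. Proof. by case. Qed.
HB.instance Definition _ := Equality.copy term (can_type term_encK).

Inductive atom := AEdge of C & term & term | AUn of nat & term.
Definition atom_enc (a : atom) : (C * term * term) + (nat * term) :=
  match a with AEdge c s t => inl (c, s, t) | AUn i t => inr (i, t) end.
Definition atom_dec (s : (C * term * term) + (nat * term)) : atom :=
  match s with inl (c, s, t) => AEdge c s t | inr (i, t) => AUn i t end.
Lemma atom_encK : cancel atom_enc atom_dec. Proof. by case. Qed.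
HB.instance Definition _ := Equality.copy atom (can_type atom_encK).

Inductive literal := LAtom of atom | LNeq of term & term.
Definition lit_enc (l : literal) : atom + (term * term) :=
  match l with LAtom a => inl a | LNeq s t => inr (s, t) end.
Definition lit_dec (s : atom + (term * term)) : literal :=
  match s with inl a => LAtom a | inr (s, t) => LNeq s t end.
Lemma lit_encK : cancel lit_enc lit_dec. Proof. by case. Qed.
HB.instance Definition _ := Equality.copy literal (can_type lit_encK).
Record rule := Rule { rbody : seq literal; rhead : atom }.

Definition term_vars (t : term) : seq nat :=
  if t is TVar v then [:: v] else [::].
Definition atom_vars (a : atom) : seq nat :=
  match a with AEdge _ s t => term_vars s ++ term_vars t
             | AUn _ t => term_vars t end.
Definition lit_vars (l : literal) : seq nat :=
  match l with LAtom a => atom_vars a | LNeq s t => term_vars s ++ term_vars t end.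
Definition fvars (phi : seq literal) : seq nat := flatten (map lit_vars phi).
Definition rule_vars (r : rule) : seq nat := fvars (rbody r) ++ atom_vars (rhead r).

Definition fact_consts (f : fact) : seq nat :=
  match f with FEdge _ a b => [:: a; b] | FUn _ a => [:: a] end.
Definition consts (D : seq fact) : seq nat := flatten (map fact_consts D).

Definition dataset (delta : nat) (D : seq fact) : Prop :=
  forall i a, FUn i a \in D -> (i < delta)%N.

Definition gterm (nu : nat -> nat) (t : term) : nat :=
  match t with TVar v => nu v | TCst c => c end.
Definition gatom (nu : nat -> nat) (a : atom) : fact :=
  match a with AEdge c s t => FEdge c (gterm nu s) (gterm nu t)
             | AUn i t => FUn i (gterm nu t) end.

Definition T_rule (r : rule) (D : seq fact) (f : fact) : Prop :=
  exists nu : nat -> nat,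
    [/\ forall v, v \in rule_vars r -> nu v \in consts D,
        forall a, LAtom a \in rbody r -> gatom nu a \in D,
        forall s t, LNeq s t \in rbody r -> gterm nu s <> gterm nu t
      & f = gatom nu (rhead r)].

Definition evar (x y : nat) (c : C) : literal := LAtom (AEdge c (TVar x) (TVar y)).

Definition disj_vars (p q : seq literal) : Prop :=
  forall v, v \in fvars p -> v \notin fvars q.

Inductive treelike (delta : nat) : nat -> seq literal -> Prop :=
| tl_top x : treelike delta x [::]
| tl_un x i : (i < delta)%N -> treelike delta x [:: LAtom (AUn i (TVar x))]
| tl_conj x p q : treelike delta x p -> treelike delta x q ->
    (forall v, v \in fvars p -> v \in fvars q -> v = x) ->
    treelike delta x (p ++ q)
| tl_edge x (c : C) (ch : seq (nat * seq literal)) :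
    (* ch = [:: (y_1, phi_1); ...; (y_n, phi_n)] *)
    uniq (map fst ch) ->
    (forall p, p \in ch -> treelike delta p.1 p.2) ->
    (forall p, p \in ch -> x \notin fvars p.2) ->
    (forall i j, (i < size ch)%N -> (j < size ch)%N -> i <> j ->
        disj_vars (nth (0%N, [::]) ch i).2 (nth (0%N, [::]) ch j).2) ->
    treelike delta x
      (flatten [seq evar x p.1 c :: p.2 | p <- ch] ++
       [seq LNeq (TVar (nth (0%N, [::]) ch ij.1).1) (TVar (nth (0%N, [::]) ch ij.2).1)
         | ij <- [seq ij <- [seq (i, j) | i <- iota 0 (size ch), j <- iota 0 (size ch)]
                  | (ij.1 < ij.2)%N]]).

Definition fanout (phi : seq literal) (v : nat) : nat :=
  size (undup (pmap (fun l => match l with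
                              | LAtom (AEdge _ (TVar u) (TVar y)) =>
                                  if u == v then Some y else None
                              | _ => None end) phi)).

Inductive chain (phi : seq literal) : nat -> nat -> Prop :=
| ch0 v : chain phi 0 v
| chS n u v c : chain phi n u -> evar u v c \in phi -> chain phi n.+1 v.

Definition depth_is (phi : seq literal) (v n : nat) : Prop :=
  chain phi n v /\ forall m, chain phi m v -> (m <= n)%N.

Definition is_ineq (l : literal) : bool := if l is LNeq _ _ then true else false.

Definition df_treelike (delta d f : nat) (x : nat) (phi : seq literal) : Prop :=
  treelike delta x phi /\
  forall v i, v \in fvars phi -> depth_is phi v i ->
    (i <= d)%N /\ (fanout phi v <= f * (d - i))%N.

Definition df_treelike_rule_noineq (delta d f : nat) (r : rule) : Prop :=
  exists x i, [/\ (i < delta)%N, rhead r = AUn i (TVar x),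
                  df_treelike delta d f x (rbody r)
                & ~~ has is_ineq (rbody r)].
End Syntax.

Record gnn (R : realType) (C : finType) := GNN {
  nlayers : nat;
  dims : nat -> nat;
  mA : forall l, 'M[R]_(dims l.+1, dims l);
  mB : forall l, C -> 'M[R]_(dims l.+1, dims l);
  bias : forall l, 'cV[R]_(dims l.+1);
  sigma : R -> R;
  thr : R   (* threshold of the step classification function *)
}.

Definition is_monotonic_max_gnn (R : realType) (C : finType) (delta : nat)
    (N : gnn R C) : Prop :=
  [/\ (1 <= nlayers N)%N,
      dims N 0 = delta /\ dims N (nlayers N) = delta,
      (forall l i j, (l < nlayers N)%N -> 0 <= mA N l i j) /\
      (forall l c i j, (l < nlayers N)%N -> 0 <= mB N l c i j),
      {homo sigma N : x y / x <= y}
    & (forall M : R, exists x, M < sigma N x) /\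
      (forall y : R, 0 <= y <-> exists x, sigma N x = y)].

(* maximum of a finite multiset (list) of reals; 0 for the empty one *)
Definition mmax (R : realType) (s : seq R) : R :=
  if s is h :: t then foldr Num.max h t else 0.

Section Apply.
Variables (R : realType) (C : finType) (N : gnn R C) (D : seq (fact C)).

Definition nbrs (c : C) (a : nat) : seq nat :=
  pmap (fun f => if f is FEdge c' a' b then
                   if (c' == c) && (a' == a) then Some b else None
                 else None) D.

Definition feat0 (a : nat) : 'cV[R]_(dims N 0) :=
  \col_(i < dims N 0) (if @FUn C i a \in D then 1 else 0).

(* labelling lambda_l (vertices v_a for the terms a of D) *)
Fixpoint lab (l : nat) : nat -> 'cV[R]_(dims N l) :=
  match l with
  | 0 => feat0
  | l'.+1 => fun a =>
      map_mx (sigma N)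
        (mA N l' *m lab l' a
         + \sum_(c : C) (mB N l' c *m
              \col_(k < dims N l') mmax [seq lab l' b k 0 | b <- nbrs c a])
         + bias N l')
  end.

Definition ventry n (v : 'cV[R]_n) (i : nat) : R :=
  if (insub i : option 'I_n) is Some k then v k 0 else 0.

Definition T_gnn (f : fact C) : Prop :=
  match f with
  | FEdge _ _ _ => f \in D
  | FUn i a => [/\ a \in consts D, (i < dims N (nlayers N))%N
                 & thr N <= ventry (lab (nlayers N) a) i]
  end.
End Apply.

Definition captures (R : realType) (C : finType) (delta : nat) (N : gnn R C)
    (r : rule C) : Prop :=
  forall D, dataset delta D -> forall f, T_rule r D f -> T_gnn N D f.

Definition delta_N (R : realType) (C : finType) (N : gnn R C) : nat :=
  \max_(l < (nlayers N).+1) dims N l.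

(* T_{Pi_N}(D): union of T_r(D) over all (L, |Col| * delta_N)-tree-like
   rules without inequalities that are captured by N (taking all such rules,
   rather than one per renaming class, gives the same union). *)
Definition T_PiN (R : realType) (C : finType) (delta : nat) (N : gnn R C)
    (D : seq (fact C)) (f : fact C) : Prop :=
  exists r : rule C,
    [/\ df_treelike_rule_noineq delta (nlayers N) (#|C| * delta_N N)%N r,
        captures delta N r
      & T_rule r D f].

Definition is_edge_fact (C : finType) (f : fact C) : bool :=
  if f is FEdge _ _ _ then true else false.

From mathcomp Require Import all_boot all_order all_algebra.
From mathcomp Require Import reals.
From mathcomp Require Import zify.
Set Implicit Arguments. Unset Strict Implicit. Unset Printing Implicit Defensive.
Import Order.TTheory GRing.Theory Num.Theory.

(* Soundness (program => GNN) is the definition of capturing.  For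
   completeness, suppose N derives U_i(a) on a dataset D.  We unravel the
   computation of N at a into a tree-like rule: the variable for a path q
   names a vertex vtx q of D, and below a vertex we place, for every colour c,
   layer l < L and feature k of layer l, one c-edge to a c-neighbour realising
   the max of feature k at layer l (if there is a neighbour at all).  The
   resulting rule
   - is (L, |Col| * delta_N)-tree-like and has no inequalities (the
     variables of distinct children lie in disjoint subtrees),
   - fires on D with head U_i(a) (each path maps to its vertex), and
   - is captured by N: by induction on layers, any homomorphic image of the
     unravelling of depth h has layer-h features at least those of the
     unravelled vertex, since the activation is monotone, weights are
     nonnegative and the max over the neighbours of vtx q is attained at a
     chosen child. *)

Section MaxAggregation.
Variable R : realType.

Lemma mmax_ge (s : seq R) x : x \in s -> (x <= mmax s)%R.
Proof.
case: s => [//|h t] /=.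
elim: t x => [|y t IH] x /=; first by rewrite mem_seq1 => /eqP->.
rewrite !in_cons le_max => /or3P[/eqP->|/eqP->|xt].
- by rewrite (IH h) ?orbT // mem_head.
- by rewrite lexx.
- by rewrite (IH x) ?orbT // in_cons xt orbT.
Qed.

Lemma mmax_ge0 (s : seq R) : (forall x, x \in s -> (0 <= x)%R) -> (0 <= mmax s)%R.
Proof.
case: s => [//|h t] s_ge0.
exact: le_trans (s_ge0 h (mem_head _ _)) (mmax_ge (mem_head h t)).
Qed.

Lemma mmax_mem (s : seq R) : s != [::] -> mmax s \in s.
Proof.
case: s => [//|h t] _ /=; elim: t => [|y t IH] /=; first exact: mem_head.
rewrite maxEle; case: ifP => _; last by rewrite !inE eqxx orbT.
by move: IH; rewrite !inE => /orP[->|->]; rewrite ?orbT.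
Qed.

(* An element of s maximising f (an arbitrary value if s is empty). *)
Definition best (f : nat -> R) (s : seq nat) : nat :=
  nth 0%N s (index (mmax (map f s)) (map f s)).

Lemma bestP (f : nat -> R) s : s != [::] ->
  best f s \in s /\ f (best f s) = mmax (map f s).
Proof.
move=> s_nil; have m_in : mmax (map f s) \in map f s.
  by apply: mmax_mem; rewrite -size_eq0 size_map size_eq0.
have i_lt : (index (mmax (map f s)) (map f s) < size s)%N by rewrite -(size_map f) index_mem.
by split; [exact: mem_nth | rewrite /best -(nth_map 0%N 0%R) // nth_index].
Qed.
End MaxAggregation.

Lemma ventry_ord (R : realType) n (v : 'cV[R]_n) (k : 'I_n) : ventry v k = v k ord0.
Proof. by rewrite /ventry valK. Qed.

Lemma mem_nbrs (C : finType) (D : seq (fact C)) c x b :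
  (b \in nbrs D c x) = (FEdge c x b \in D).
Proof.
rewrite /nbrs mem_pmap; apply/mapP/idP => [[[c' x' b'|i y] f_in //=]|e_in].
  by case: ifP => // /andP[/eqP<- /eqP<-] [->].
by exists (FEdge c x b) => //=; rewrite !eqxx.
Qed.

Lemma mem_consts (C : finType) (D : seq (fact C)) f x :
  f \in D -> x \in fact_consts f -> x \in consts D.
Proof. by move=> f_in x_in; apply/flattenP; exists (fact_consts f); rewrite ?map_f. Qed.

Lemma mem_fvars (C : finType) (p : seq (literal C)) v :
  v \in fvars p -> exists2 l, l \in p & v \in lit_vars l.
Proof. by case/flattenP => s /mapP[l l_in ->] v_in; exists l. Qed.

Lemma fvars_cat (C : finType) (p q : seq (literal C)) :
  fvars (p ++ q) = fvars p ++ fvars q.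
Proof. by rewrite /fvars map_cat flatten_cat. Qed.

Definition succs (C : finType) (phi : seq (literal C)) (v : nat) : seq nat :=
  pmap (fun l => match l with
                 | LAtom (AEdge _ (TVar u) (TVar y)) => if u == v then Some y else None
                 | _ => None end) phi.

Lemma fanoutE (C : finType) (phi : seq (literal C)) v :
  fanout phi v = size (undup (succs phi v)).
Proof. by []. Qed.

Lemma mem_succs (C : finType) (phi : seq (literal C)) v y :
  y \in succs phi v -> exists c, evar v y c \in phi.
Proof.
rewrite mem_pmap => /mapP[[[c [u|u] [y'|y'] | i t] | s t] l_in] //=.
by case: eqP => // eq_u [eq_y]; exists c; rewrite eq_y -eq_u.
Qed.

Lemma fanout_le (C : finType) (phi : seq (literal C)) v (S : seq nat) :
  (forall c y, evar v y c \in phi -> y \in S) -> (fanout phi v <= size S)%N.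
Proof.
move=> succ_S; rewrite fanoutE; apply: uniq_leq_size (undup_uniq _) _ => y.
by rewrite mem_undup => /mem_succs[c /succ_S].
Qed.

Lemma fanout_pos (C : finType) (phi : seq (literal C)) v :
  (0 < fanout phi v)%N -> exists c y, evar v y c \in phi.
Proof.
rewrite fanoutE; case E: (succs phi v) => [//|y t] _.
have [c e_in] : exists c, evar v y c \in phi by apply: mem_succs; rewrite E mem_head.
by exists c, y.
Qed.

Lemma tl_edge1 (C : finType) delta x y (c : C) q :
  treelike delta y q -> x \notin fvars q -> treelike delta x (evar x y c :: q).
Proof.
move=> tl_q x_q; have := @tl_edge C delta x c [:: (y, q)] isT.
rewrite /= !cats0; apply.
- by move=> p; rewrite mem_seq1 => /eqP->.
- by move=> p; rewrite mem_seq1 => /eqP->.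
- by move=> [|i] [|j].
Qed.

Lemma tl_units (C : finType) delta x (ks : seq nat) :
  all (fun k => k < delta)%N ks ->
  treelike delta x [seq LAtom (AUn C k (TVar x)) | k <- ks].
Proof.
elim: ks => [|k ks IH] /=; first by constructor.
case/andP=> k_lt ks_lt.
apply: (@tl_conj C delta x [:: _] _ (tl_un C x k_lt) (IH ks_lt)).
by move=> v; rewrite /fvars /= mem_seq1 => /eqP.
Qed.

Section LayerMonotonicity.
Variables (R : realType) (C : finType) (N : gnn R C).
Hypothesis A_ge0 : forall l i j, (l < nlayers N)%N -> (0 <= mA N l i j)%R.
Hypothesis B_ge0 : forall l c i j, (l < nlayers N)%N -> (0 <= mB N l c i j)%R.
Hypothesis sigma_mono : {homo sigma N : x y / (x <= y)%R}.
Hypothesis sigma_range : forall y : R, (0 <= y)%R <-> exists x, sigma N x = y.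

(* Labels are nonnegative: Boolean at layer 0, in the range of sigma afterwards. *)
Lemma lab_ge0 D l x (k : 'I_(dims N l)) : (0 <= lab N D l x k 0)%R.
Proof.
case: l k => [|l] k /=; first by rewrite /feat0 mxE; case: ifP.
by rewrite mxE; apply/sigma_range; eexists.
Qed.

Lemma lab_step_mono D D' h x x' : (h < nlayers N)%N ->
  (forall k, lab N D h x k 0 <= lab N D' h x' k 0)%R ->
  (forall c k, mmax [seq lab N D h b k 0 | b <- nbrs D c x]
               <= mmax [seq lab N D' h b k 0 | b <- nbrs D' c x'])%R ->
  forall k, (lab N D h.+1 x k 0 <= lab N D' h.+1 x' k 0)%R.
Proof.
move=> h_lt self_le agg_le k; rewrite /= !mxE; apply: sigma_mono.
rewrite !summxE; apply: lerD => //; apply: lerD.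
  by apply: ler_sum => j _; apply: ler_wpM2l; [exact: A_ge0 | exact: self_le].
apply: ler_sum => c _; rewrite !mxE; apply: ler_sum => j _.
by apply: ler_wpM2l; [exact: B_ge0 | rewrite !mxE; exact: agg_le].
Qed.
End LayerMonotonicity.

(* The unravelling of the computation of N at the vertex a of D.  A path
   is a list of steps (c, k, l), innermost first: take a c-neighbour that
   maximises feature k at layer l. *)
Section Unravelling.
Variables (R : realType) (C : finType) (delta : nat) (N : gnn R C).
Variables (D : seq (fact C)) (a : nat).
Local Notation L := (nlayers N).
Local Notation path := (seq (C * nat * nat)).

Definition var (q : path) : nat := pickle q.

Lemma var_inj : injective var.
Proof. exact: pcan_inj pickleK. Qed.

Lemma var_branch s s' ck ck' q :
  var (s ++ ck :: q) = var (s' ++ ck' :: q) -> ck = ck'.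
Proof.
move/var_inj => E.
have size_s : size s = size s' by move/(congr1 size): E; rewrite !size_cat /=; lia.
by move/(congr1 (drop (size s))): E; rewrite drop_size_cat // size_s drop_size_cat // => -[].
Qed.

Lemma var_branch_root s ck q : var (s ++ ck :: q) <> var q.
Proof. by move/var_inj/(congr1 size); rewrite size_cat /=; lia. Qed.

Fixpoint vtx (q : path) : nat :=
  match q with
  | [::] => a
  | (c, k, l) :: p => best (fun b => ventry (lab N D l b) k) (nbrs D c (vtx p))
  end.

Definition units (q : path) : seq (literal C) :=
  [seq LAtom (AUn C k (TVar (var q))) | k <- [seq k <- iota 0 delta | FUn C k (vtx q) \in D]].

Definition steps (h : nat) (q : path) : path :=
  [seq ck <- [seq (c, k, h) | c <- enum C, k <- iota 0 (dims N h)] | nbrs D ck.1.1 (vtx q) != [::]].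

Fixpoint unravel (h : nat) (q : path) : seq (literal C) :=
  match h with
  | 0 => units q
  | h'.+1 => unravel h' q ++
      flatten [seq evar (var q) (var (ck :: q)) ck.1.1 :: unravel h' (ck :: q) | ck <- steps h' q]
  end.

(* The number of layers still available below q. *)
Definition height (q : path) : nat := if q is (_, _, l) :: _ then l else L.

Lemma mem_steps h q ck : ck \in steps h q ->
  exists c k, [/\ ck = (c, k, h), (k < dims N h)%N & nbrs D c (vtx q) != [::]].
Proof.
rewrite mem_filter => /andP[nbrs_q /allpairsP[[c k] [_ /= k_in ck_eq]]].
subst ck; by exists c, k; split => //; rewrite mem_iota add0n in k_in.
Qed.

Lemma in_steps h q c k : (k < dims N h)%N -> nbrs D c (vtx q) != [::] ->
  (c, k, h) \in steps h q.
Proof.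
move=> k_lt nbrs_q; rewrite mem_filter nbrs_q /=.
by apply: (allpairs_f (fun c k => (c, k, h))); rewrite ?mem_enum ?mem_iota.
Qed.

Lemma uniq_steps h q : uniq (steps h q).
Proof.
apply/filter_uniq/allpairs_uniq; rewrite ?enum_uniq ?iota_uniq //.
by move=> [c k] [c' k'] _ _ /= [-> ->].
Qed.

Definition below (q : path) (phi : seq (literal C)) : Prop :=
  forall v, v \in fvars phi -> exists s, v = var (s ++ q).

Lemma vars_children q (F : C * nat * nat -> seq (literal C)) (cs : path) v :
  (forall ck, ck \in cs -> below (ck :: q) (F ck)) ->
  v \in fvars (flatten [seq evar (var q) (var (ck :: q)) ck.1.1 :: F ck | ck <- cs]) ->
  v = var q \/ exists2 ck, ck \in cs & exists s, v = var (s ++ ck :: q).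
Proof.
elim: cs => [|ck cs IH] F_below /=; first by rewrite /fvars /= in_nil.
rewrite -cat_cons fvars_cat mem_cat => /orP[|v_in].
  rewrite /fvars /= !in_cons => /or3P[/eqP->|/eqP->|v_in]; first by left.
    by right; exists ck; [exact: mem_head | exists [::]].
  by right; exists ck; [exact: mem_head | exact: F_below (mem_head _ _) v v_in].
have F_below' ck' : ck' \in cs -> below (ck' :: q) (F ck').
  by move=> ck'_in; apply: F_below; rewrite in_cons ck'_in orbT.
case: (IH F_below' v_in) => [->|[ck' ck'_in desc]]; first by left.
by right; exists ck' => //; rewrite in_cons ck'_in orbT.
Qed.

Lemma vars_unravel h q v : v \in fvars (unravel h q) ->
  v = var q \/ exists c k l s, (l < h)%N /\ v = var (s ++ (c, k, l) :: q).
Proof.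
elim: h q v => [|h IH] q v /=.
  by case/mem_fvars => _ /mapP[k _ ->]; rewrite /= mem_seq1 => /eqP; left.
rewrite fvars_cat mem_cat => /orP[/IH[->|[c [k [l [s [l_lt ->]]]]]]|v_in].
- by left.
- by right; exists c, k, l, s; split => //; apply: ltnW.
have children_below ck : ck \in steps h q -> below (ck :: q) (unravel h (ck :: q)).
  move=> _ w /IH[->|[c [k [l [s [_ ->]]]]]]; first by exists [::].
  by exists (s ++ [:: (c, k, l)]); rewrite -catA.
have [->|[ck ck_in [s ->]]] := vars_children children_below v_in; first by left.
have [c [k [-> _ _]]] := mem_steps ck_in.
by right; exists c, k, h, s.
Qed.

Lemma below_unravel h q : below q (unravel h q).
Proof.
move=> v /vars_unravel[->|[c [k [l [s [_ ->]]]]]]; first by exists [::].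
by exists (s ++ [:: (c, k, l)]); rewrite -catA.
Qed.

Lemma tl_children q (F : C * nat * nat -> seq (literal C)) (cs : path) :
  uniq cs ->
  (forall ck, ck \in cs -> treelike delta (var (ck :: q)) (F ck)) ->
  (forall ck, ck \in cs -> below (ck :: q) (F ck)) ->
  treelike delta (var q) (flatten [seq evar (var q) (var (ck :: q)) ck.1.1 :: F ck | ck <- cs]).
Proof.
elim: cs => [|ck cs IH] /=; first by constructor.
case/andP=> ck_notin uniq_cs tl_F F_below; rewrite -cat_cons.
have F_below' ck' : ck' \in cs -> below (ck' :: q) (F ck').
  by move=> ck'_in; apply: F_below; rewrite in_cons ck'_in orbT.
apply: tl_conj.
- apply: tl_edge1; first exact: tl_F (mem_head _ _).
  by apply/negP => /(F_below ck (mem_head _ _)) [s /esym /var_branch_root].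
- by apply: IH => // ck' ck'_in; apply: tl_F; rewrite in_cons ck'_in orbT.
move=> v v_head /(vars_children F_below') [//|[ck' ck'_in [s' v_eq']]].
move: v_head; rewrite /fvars /= !in_cons => /or3P[/eqP//|/eqP v_eq|v_in];
  exfalso; move/negP: ck_notin; apply.
  by rewrite (@var_branch [::] s' ck ck' q) // -v_eq -v_eq'.
have [s v_eq] := F_below ck (mem_head _ _) v v_in.
by rewrite (var_branch (etrans (esym v_eq) v_eq')).
Qed.

Lemma treelike_unravel h q : treelike delta (var q) (unravel h q).
Proof.
elim: h q => [|h IH] q /=.
  apply: tl_units; apply/allP => k; rewrite mem_filter mem_iota add0n.
  by case/andP=> _ /andP[].
have children_below ck : ck \in steps h q -> below (ck :: q) (unravel h (ck :: q)).
  by move=> _; apply: below_unravel.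
apply: tl_conj; first exact: IH.
  apply: tl_children; [exact: uniq_steps | by move=> ck _; apply: IH | exact: children_below].
move=> v /vars_unravel[//|[c [k [l [s [l_lt v_eq]]]]]].
case/(vars_children children_below) => [//|[ck ck_in [s' v_eq']]].
have [c' [k' [ck_eq _ _]]] := mem_steps ck_in.
have := var_branch (etrans (esym v_eq) v_eq'); rewrite ck_eq => -[_ _ l_eq].
by rewrite l_eq ltnn in l_lt.
Qed.

Definition unary_shape (l : literal C) : Prop :=
  exists k q, l = LAtom (AUn C k (TVar (var q))) /\ FUn C k (vtx q) \in D.

Definition edge_shape (l : literal C) : Prop :=
  exists c k h q, [/\ l = evar (var q) (var ((c, k, h) :: q)) c, (k < dims N h)%N,
    (h < height q)%N, (height q + size q <= L)%N & nbrs D c (vtx q) != [::]].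

Lemma mem_unravel h q l : l \in unravel h q ->
  (h <= height q)%N -> (height q + size q <= L)%N -> unary_shape l \/ edge_shape l.
Proof.
elim: h q => [|h IH] q /= l_in h_le hq.
  move: l_in => /mapP[k]; rewrite mem_filter => /andP[k_D _] ->.
  by left; exists k, q.
move: l_in; rewrite mem_cat => /orP[l_in|/flattenP[s' /mapP[ck ck_in ->]]].
  by apply: IH l_in _ hq; apply: ltnW.
have [c [k [ck_eq k_lt nbrs_q]]] := mem_steps ck_in; subst ck.
rewrite in_cons => /orP[/eqP->|l_in]; first by right; exists c, k, h, q.
by apply: IH l_in _ _ => //=; lia.
Qed.

Definition body : seq (literal C) := unravel L [::].

Lemma mem_body l : l \in body -> unary_shape l \/ edge_shape l.
Proof. by move=> l_in; apply: mem_unravel l_in _ _ => //=; rewrite addn0. Qed.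

Lemma chain_body n v : chain body n v ->
  n = 0%N \/ exists q, [/\ v = var q, (n <= size q)%N & (height q + size q <= L)%N].
Proof.
elim=> [w|m u w c _ IH /mem_body[[k [q [//]]]|[c' [k [h [q [e_eq _ h_lt hq _]]]]]]].
  by left.
case: e_eq => _ u_eq w_eq; right; exists ((c', k, h) :: q); split => //=; last by lia.
case: IH => [->//|[q' [u_eq' m_le _]]].
by rewrite (var_inj (etrans (esym u_eq') u_eq)) in m_le.
Qed.

Lemma dims_le_deltaN l : (l <= L)%N -> (dims N l <= delta_N N)%N.
Proof.
move=> l_le; have l_lt : (l < L.+1)%N by [].
exact: (leq_bigmax (F := fun i : 'I_L.+1 => dims N i) (Ordinal l_lt)).
Qed.

Lemma fanout_var q : (fanout body (var q) <= #|C| * delta_N N * height q)%N.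
Proof.
pose S := [seq var ((c, kl.1, kl.2) :: q) | c <- enum C,
            kl <- [seq (k, l) | k <- iota 0 (delta_N N), l <- iota 0 (height q)]].
apply: leq_trans (fanout_le (S := S) _) _; last first.
  by rewrite !size_allpairs -cardE !size_iota mulnA.
move=> c y /mem_body[[k [q' [//]]]|[c' [k [l [q' [e_eq k_lt l_lt hq _]]]]]].
case: e_eq => _ /var_inj q_eq ->; subst q'.
apply/allpairsP; exists (c', (k, l)); split; rewrite ?mem_enum //=.
apply/allpairsP; exists (k, l); split; rewrite //= mem_iota add0n //.
by apply: leq_trans k_lt (dims_le_deltaN _); lia.
Qed.

Lemma fanout_body v i : depth_is body v i ->
  (i <= L)%N /\ (fanout body v <= #|C| * delta_N N * (L - i))%N.
Proof.
case=> /chain_body depth_v _.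
split; first by case: depth_v => [->|[q [_ ? ?]]] //; lia.
have [->//|/fanout_pos[c [y]]] := posnP (fanout body v).
case/mem_body=> [[k [q [//]]]|[c' [k [l [q [[_ v_eq _] _ _ hq _]]]]]].
rewrite v_eq; apply: leq_trans (fanout_var q) _; rewrite leq_mul2l; apply/orP; right.
case: depth_v => [->|[q' [v_eq' i_le _]]]; first by lia.
by rewrite (var_inj (etrans (esym v_eq') v_eq)) in i_le; lia.
Qed.

Definition nu0 (v : nat) : nat := vtx (odflt [::] (unpickle v)).

Lemma nu0_var q : nu0 (var q) = vtx q.
Proof. by rewrite /nu0 /var pickleK. Qed.

Lemma edge_vtx c k l q : nbrs D c (vtx q) != [::] ->
  FEdge c (vtx q) (vtx ((c, k, l) :: q)) \in D.
Proof.
by move=> nbrs_q; rewrite -mem_nbrs; case: (bestP (fun b => ventry (lab N D l b) k) nbrs_q).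
Qed.

Lemma agg_vtx c h (j : 'I_(dims N h)) q : nbrs D c (vtx q) != [::] ->
  (mmax [seq lab N D h b j 0 | b <- nbrs D c (vtx q)]
   = lab N D h (vtx ((c, val j, h) :: q)) j 0)%R.
Proof.
move=> nbrs_q; have [_ best_max] := bestP (fun b => ventry (lab N D h b) j) nbrs_q.
rewrite /= -ventry_ord best_max; congr mmax; apply: eq_map => b.
by rewrite ventry_ord.
Qed.

Lemma body_hom t : LAtom t \in body -> gatom nu0 t \in D.
Proof.
case/mem_body => [[k [q [[->] k_D]]]|[c [k [l [q [[->] _ _ _ nbrs_q]]]]]].
  by rewrite /= nu0_var.
by rewrite /= !nu0_var; exact: edge_vtx.
Qed.

Lemma body_vars v : v \in fvars body -> nu0 v \in consts D.
Proof.
case/mem_fvars => l /mem_body[[k [q [-> k_D]]]|[c [k [h [q [-> _ _ _ nbrs_q]]]]]].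
  by rewrite /= mem_seq1 => /eqP->; rewrite nu0_var; apply: (mem_consts k_D); rewrite mem_head.
have e_D := edge_vtx k h nbrs_q.
by rewrite /= !in_cons orbF => /orP[] /eqP->; rewrite nu0_var;
  apply: (mem_consts e_D); rewrite /= !in_cons eqxx ?orbT.
Qed.

Lemma body_noineq : ~~ has (@is_ineq C) body.
Proof.
by apply/hasPn => l /mem_body[[k [q [-> _]]]|[c [k [h [q [-> _ _ _ _]]]]]].
Qed.

Definition unravel_rule (i : nat) : rule C := Rule body (AUn C i (TVar (var [::]))).

Lemma unravel_rule_treelike i : (i < delta)%N ->
  df_treelike_rule_noineq delta L (#|C| * delta_N N) (unravel_rule i).
Proof.
move=> i_lt; exists (var [::]), i; split => //; last exact: body_noineq.
by split; [exact: treelike_unravel | move=> v j _; exact: fanout_body].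
Qed.

Lemma unravel_rule_fires i : a \in consts D -> T_rule (unravel_rule i) D (FUn C i a).
Proof.
move=> a_in; exists nu0; split; last by rewrite /= nu0_var.
- move=> v; rewrite /rule_vars mem_cat => /orP[/body_vars //|].
  by rewrite /= mem_seq1 => /eqP->; rewrite nu0_var.
- exact: body_hom.
- by move=> s t st_in; move/hasPn/(_ _ st_in): body_noineq.
Qed.

Section Capture.
Hypothesis A_ge0 : forall l i j, (l < L)%N -> (0 <= mA N l i j)%R.
Hypothesis B_ge0 : forall l c i j, (l < L)%N -> (0 <= mB N l c i j)%R.
Hypothesis sigma_mono : {homo sigma N : x y / (x <= y)%R}.
Hypothesis sigma_range : forall y : R, (0 <= y)%R <-> exists x, sigma N x = y.
Hypothesis dims0 : dims N 0 = delta.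

Lemma lab_vtx_le D' (nu : nat -> nat) h q : (h <= L)%N ->
  (forall t, LAtom t \in unravel h q -> gatom nu t \in D') ->
  forall k, (lab N D h (vtx q) k 0 <= lab N D' h (nu (var q)) k 0)%R.
Proof.
elim: h q => [|h IH] q h_le hom k.
  rewrite /= /feat0 !mxE; case: ifP => [k_D|_]; last by case: ifP.
  have k_lt : (k < delta)%N by rewrite -dims0.
  rewrite (hom (AUn C k (TVar (var q)))) //.
  by apply: map_f; rewrite mem_filter k_D mem_iota add0n k_lt.
apply: (lab_step_mono A_ge0 B_ge0 sigma_mono) => // [j|c j].
  by apply: IH (ltnW h_le) _ j => t t_in; apply: hom; rewrite /= mem_cat t_in.
have [->|nbrs_q] := eqVneq (nbrs D c (vtx q)) [::].
  by apply: mmax_ge0 => _ /mapP[b _ ->]; exact: lab_ge0.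
rewrite agg_vtx //; set ch := (c, val j, h) :: q.
have hom_child t : LAtom t \in evar (var q) (var ch) c :: unravel h ch -> gatom nu t \in D'.
  move=> t_in; apply: hom; rewrite /= mem_cat; apply/orP; right; apply/flattenP.
  exists (evar (var q) (var ch) c :: unravel h ch) => //.
  by apply/mapP; exists (c, val j, h); rewrite ?(in_steps (ltn_ord j) nbrs_q).
have child_le : (lab N D h (vtx ch) j 0 <= lab N D' h (nu (var ch)) j 0)%R.
  apply: (IH ch (ltnW h_le) _ j) => t t_in.
  by apply: hom_child; rewrite in_cons t_in orbT.
apply: le_trans child_le (mmax_ge _); apply: map_f; rewrite mem_nbrs.
exact: (hom_child (AEdge c (TVar (var q)) (TVar (var ch)))) (mem_head _ _).
Qed.

Lemma unravel_rule_captured (k : 'I_(dims N L)) :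
  (thr N <= lab N D L a k 0)%R -> captures delta N (unravel_rule k).
Proof.
move=> thr_le D' _ f [nu [nu_vars nu_hom _ ->]]; split => //.
  by apply: nu_vars; rewrite /rule_vars mem_cat /= mem_seq1 eqxx orbT.
rewrite ventry_ord; apply: le_trans thr_le _.
exact: (lab_vtx_le (leqnn _) nu_hom).
Qed.
End Capture.
End Unravelling.

Unset Implicit Arguments.

(* Theorem 6; edge facts are copied unchanged by the decoding of N. *)
Theorem theorem6 (R : realType) (C : finType) (delta : nat) (N : gnn R C) :
  is_monotonic_max_gnn delta N ->
  forall D : seq (fact C), dataset delta D ->
  forall f : fact C,
    T_gnn N D f <-> (T_PiN delta N D f \/ (is_edge_fact f /\ f \in D)).
Proof.
move=> [_ [dims0 dimsL] [A_ge0 B_ge0] sigma_mono [_ sigma_range]] D D_ok f; split.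
  case: f => [c x y|i x] /= f_N; first by right.
  case: f_N => x_in i_lt thr_le; left.
  exists (unravel_rule delta N D x i); split.
  - by apply: unravel_rule_treelike; rewrite -dimsL.
  - apply: (unravel_rule_captured A_ge0 B_ge0 sigma_mono sigma_range dims0
              (k := Ordinal i_lt)).
    by rewrite -ventry_ord.
  - exact: unravel_rule_fires.
case=> [[r [_ r_captured r_fires]]|[f_edge f_in]]; first exact: r_captured D D_ok f r_fires.
by case: f f_edge f_in.
Qed.
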